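(* Let $\mathfrak F$ and $\mathfrak G$ be semiclosed generalized flags in $V$ and $V_*$, respectively. The following are equivalent: (1) $\mathfrak F,\mathfrak G$ form a taut couple; (2) for every $F\in\mathfrak F$ such that $F^\perp$ is a nonzero proper subspace of $V_*$, $F^\perp$ is both a union and an intersection of members of $\mathfrak G$; and for every $G\in\mathfrak G$ such that $G^\perp$ is a nonzero proper subspace of $V$, $G^\perp$ is both a union and an intersection of members of $\mathfrak F$.
   Context: $V,V_*$: countable-dimensional complex spaces with a nondegenerate pairing $\langle\cdot,\cdot\rangle$; $\mathfrak{gl}(V,V_* )=V\otimes V_*$ acts on $V$ by $(v\otimes w)u=\langle u,w\rangle v$ and on $V_*$ by $(v\otimes w)y=-\langle v,y\rangle w$. $F^\perp$ is the orthogonal complement under the pairing; $F$ is closed if $F=F^{\perp\perp}$, $\overline F:=F^{\perp\perp}$. A generalized flag in $V$ (similarly in $V_*$) is a chain $\mathfrak F$ of subspaces such that every member belongs to an immediate predecessor–successor pair $F'\subsetneq F''$ of $\mathfrak F$ (no member strictly between), and every nonzero vector $v$ lies in $F''\setminus F'$ for some pair. It is semiclosed if for each pair $F'\subset F''$ one has $\overline{F'}\in\{F',F''\}$. $\mathrm{St}_{\mathfrak F}$ is the stabilizer of $\mathfrak F$ in $\mathfrak{gl}(V,V_* )$. Semiclosed generalized flags $\mathfrak F$ in $V$ and $\mathfrak G$ in $V_*$ form a taut couple if the chain $\mathfrak F^\perp=\{F^\perp:F\in\mathfrak F\}$ is stable under $\mathrm{St}_{\mathfrak G}$ and the chain $\mathfrak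 G^\perp$ is stable under $\mathrm{St}_{\mathfrak F}$. *)

From HB Require Import structures.
From mathcomp Require Import all_boot all_order all_algebra.
Set Implicit Arguments. Unset Strict Implicit. Unset Printing Implicit Defensive.
Import GRing.Theory.
Local Open Scope ring_scope.

Definition subset_of (T : Type) (A B : T -> Prop) : Prop := forall x, A x -> B x.
Definition seteq (T : Type) (A B : T -> Prop) : Prop := subset_of A B /\ subset_of B A.

Definition subspace (K : fieldType) (V : lmodType K) (A : V -> Prop) : Prop :=
  A 0 /\ forall (a : K) (x y : V), A x -> A y -> A (a *: x + y).

Definition countable_dim (K : fieldType) (V : lmodType K) : Prop :=
  exists e : nat -> V, forall v : V,
    exists (n : nat) (c : nat -> K), v = \sum_(i < n) c i *: e i.

Definition nondeg_pairing (K : fieldType) (V W : lmodType K) (p : V -> W -> K) : Prop :=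
  (forall (a : K) (x y : V) (w : W), p (a *: x + y) w = a * p x w + p y w) /\
  (forall (a : K) (v : V) (x y : W), p v (a *: x + y) = a * p v x + p v y) /\
  (forall v : V, (forall w : W, p v w = 0) -> v = 0) /\
  (forall w : W, (forall v : V, p v w = 0) -> w = 0).

Definition flip_pairing (K : fieldType) (V W : lmodType K) (p : V -> W -> K) : W -> V -> K :=
  fun w v => p v w.

Definition perp (K : fieldType) (V W : lmodType K) (p : V -> W -> K) (F : V -> Prop) : W -> Prop :=
  fun w => forall v, F v -> p v w = 0.

Definition pclosure (K : fieldType) (V W : lmodType K) (p : V -> W -> K) (F : V -> Prop) : V -> Prop :=
  perp (flip_pairing p) (perp p F).

Definition imm_pair (T : Type) (fl : (T -> Prop) -> Prop) (F' F'' : T -> Prop) : Prop :=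
  fl F' /\ fl F'' /\ subset_of F' F'' /\ ~ subset_of F'' F' /\
  forall H, fl H -> subset_of F' H -> subset_of H F'' -> seteq H F' \/ seteq H F''.

Definition gen_flag (K : fieldType) (V : lmodType K) (fl : (V -> Prop) -> Prop) : Prop :=
  (forall F, fl F -> subspace F) /\
  (forall F1 F2, fl F1 -> fl F2 -> subset_of F1 F2 \/ subset_of F2 F1) /\
  (forall F, fl F -> exists F' F'', imm_pair fl F' F'' /\ (seteq F F' \/ seteq F F'')) /\
  (forall v : V, v <> 0 -> exists F' F'', imm_pair fl F' F'' /\ F'' v /\ ~ F' v).

Definition semiclosed (K : fieldType) (V W : lmodType K) (p : V -> W -> K)
    (fl : (V -> Prop) -> Prop) : Prop :=
  forall F' F'', imm_pair fl F' F'' ->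
    seteq (pclosure p F') F' \/ seteq (pclosure p F') F''.

(* Elements of gl(V,V_* ) = V (x) V_* are given by finite lists of pure tensors
   [v_i (x) w_i]; their actions on V and V_* are: *)
Definition actV (K : fieldType) (V W : lmodType K) (p : V -> W -> K)
    (s : seq (V * W)) (u : V) : V :=
  \sum_(t <- s) p u t.2 *: t.1.
Definition actW (K : fieldType) (V W : lmodType K) (p : V -> W -> K)
    (s : seq (V * W)) (y : W) : W :=
  \sum_(t <- s) (- p t.1 y) *: t.2.

Definition stableV (K : fieldType) (V W : lmodType K) (p : V -> W -> K)
    (s : seq (V * W)) (A : V -> Prop) : Prop :=
  forall u, A u -> A (actV p s u).
Definition stableW (K : fieldType) (V W : lmodType K) (p : V -> W -> K)
    (s : seq (V * W)) (B : W -> Prop) : Prop :=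
  forall y, B y -> B (actW p s y).

Definition in_StV (K : fieldType) (V W : lmodType K) (p : V -> W -> K)
    (fl : (V -> Prop) -> Prop) (s : seq (V * W)) : Prop :=
  forall F, fl F -> stableV p s F.
Definition in_StW (K : fieldType) (V W : lmodType K) (p : V -> W -> K)
    (gl : (W -> Prop) -> Prop) (s : seq (V * W)) : Prop :=
  forall G, gl G -> stableW p s G.

Definition taut_couple (K : fieldType) (V W : lmodType K) (p : V -> W -> K)
    (fl : (V -> Prop) -> Prop) (gl : (W -> Prop) -> Prop) : Prop :=
  gen_flag fl /\ semiclosed p fl /\ gen_flag gl /\ semiclosed (flip_pairing p) gl /\
  (forall s, in_StW p gl s -> forall F, fl F -> stableW p s (perp p F)) /\
  (forall s, in_StV p fl s -> forall G, gl G -> stableV p s (perp (flip_pairing p) G)).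

Definition nonzero_proper (T : zmodType) (A : T -> Prop) : Prop :=
  (exists x, A x /\ x <> 0) /\ (exists x, ~ A x).

Definition union_of_members (T : Type) (fl : (T -> Prop) -> Prop) (A : T -> Prop) : Prop :=
  exists S : (T -> Prop) -> Prop, (forall H, S H -> fl H) /\
    seteq A (fun x => exists H, S H /\ H x).
Definition inter_of_members (T : Type) (fl : (T -> Prop) -> Prop) (A : T -> Prop) : Prop :=
  exists S : (T -> Prop) -> Prop, (forall H, S H -> fl H) /\
    seteq A (fun x => forall H, S H -> H x).

From HB Require Import structures.
From mathcomp Require Import all_boot all_order all_algebra.
From Stdlib Require Import Classical.
Set Implicit Arguments. Unset Strict Implicit. Unset Printing Implicit Defensive.
Import GRing.Theory.
Local Open Scope ring_scope.

(* Fix a pairing q : A -> B -> K, linear in its second argument, a semiclosed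
   generalized flag gl in B and a subset F of A; put X := F^perp in B.
   Call X "compatible" with gl when for every immediate pair G' < G'' of gl
   either X <= G' or G'' <= X.
   - A compatible subspace is the union of the members it contains (if it has
     a nonzero vector) and the intersection of the members containing it,
     because every nonzero vector separates some immediate pair.
   - If X is stable under every rank-one operator y |-> q v y *: z that
     stabilizes all members of gl, then X is compatible: for an immediate pair
     (H', H'') with v in H'^perp and z in H'', such an operator stabilizes gl,
     which forces X into the closure of H' as soon as z lies outside X;
     semiclosedness then turns this into the dichotomy.
   The direction (1) => (2) applies this on both sides, the rank-one operators
   being elements v (x) z of gl(V,V_* ); the direction (2) => (1) holds since a
   union of stable subspaces is stable. *)

Section Subspaces.
Variables (K : fieldType) (B : lmodType K) (G : B -> Prop).
Hypothesis sG : subspace G.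

Lemma subspace0 : G 0.
Proof. by case: sG. Qed.

Lemma subspace_scale c z : G z -> G (c *: z).
Proof. by move=> Gz; rewrite -[c *: z]addr0; apply: sG.2 => //; apply: subspace0. Qed.

Lemma subspace_unscale c z : c != 0 -> G (c *: z) -> G z.
Proof.
by move=> cn /(subspace_scale c^-1); rewrite scalerA mulVf // scale1r.
Qed.

End Subspaces.

Lemma not_subset_witness (T : Type) (X Y : T -> Prop) :
  ~ subset_of X Y -> exists x, X x /\ ~ Y x.
Proof.
move=> nXY; apply: NNPP => nwit; apply: nXY => x Xx.
by apply: NNPP => nYx; apply: nwit; exists x.
Qed.

Section Orthogonals.
Variables (K : fieldType) (A B : lmodType K) (q : A -> B -> K).
Hypothesis q_linear : forall a c x y, q a (c *: x + y) = c * q a x + q a y.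

Lemma pairing0r a : q a 0 = 0.
Proof.
have := q_linear a 1 0 0; rewrite scaler0 addr0 mul1r.
by move/(congr1 (fun t => t - q a 0)); rewrite subrr addrK.
Qed.

Lemma perp_subspace F : subspace (perp q F).
Proof.
split; first by move=> v _; apply: pairing0r.
by move=> c x y Xx Xy v Fv; rewrite q_linear Xx // Xy // mulr0 addr0.
Qed.

Lemma closure_sub_perp F G :
  subset_of G (perp q F) -> subset_of (pclosure (flip_pairing q) G) (perp q F).
Proof. by move=> GX x clx v Fv; apply: clx => g Gg; apply: GX. Qed.

End Orthogonals.

Lemma imm_pair_split (K : fieldType) (B : lmodType K) (gl : (B -> Prop) -> Prop)
    H' H'' G :
  gen_flag gl -> imm_pair gl H' H'' -> gl G -> subset_of H'' G \/ subset_of G H'.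
Proof.
case=> _ [chain _] [glH' [glH'' [_ [_ imm]]]] glG.
case: (chain _ _ glH'' glG) => [|GH'']; first by left.
case: (chain _ _ glH' glG) => [H'G|]; last by right.
by case: (imm G glG H'G GH'') => -[]; [right | left].
Qed.

Definition flag_compatible (K : fieldType) (B : lmodType K)
    (gl : (B -> Prop) -> Prop) (X : B -> Prop) : Prop :=
  forall G' G'', imm_pair gl G' G'' -> subset_of X G' \/ subset_of G'' X.

Section CompatibleSubspaces.
Variables (K : fieldType) (B : lmodType K) (gl : (B -> Prop) -> Prop).
Hypothesis hgl : gen_flag gl.
Variable X : B -> Prop.
Hypotheses (X0 : X 0) (compX : flag_compatible gl X).

Lemma compatible_cover y :
  X y -> y <> 0 -> exists G, (gl G /\ subset_of G X) /\ G y.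
Proof.
move=> Xy yn; have [G' [G'' [pair [G''y nG'y]]]] := hgl.2.2.2 y yn.
case: (compX pair) => [XG'|G''X]; first by case: nG'y; apply: XG'.
by exists G''; split => //; split => //; case: pair => _ [].
Qed.

Lemma compatible_union :
  (exists y, X y /\ y <> 0) -> union_of_members gl X.
Proof.
move=> [y0 [Xy0 y0n]].
exists (fun G => gl G /\ subset_of G X); split; first by move=> G [].
split; last by move=> x [G [[_ GX] Gx]]; apply: GX.
move=> x Xx; case: (eqVneq x 0) => [->|xn]; last exact/compatible_cover/eqP.
have [G [[glG GX] _]] := compatible_cover Xy0 y0n.
by exists G; split => //; apply: subspace0 (hgl.1 G glG).
Qed.

Lemma compatible_inter : inter_of_members gl X.
Proof.
exists (fun G => gl G /\ subset_of X G); split; first by move=> G [].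
split; first by move=> x Xx G [_ XG]; apply: XG.
move=> y all_y; apply: NNPP => nXy.
have yn : y <> 0 by move=> y0; apply: nXy; rewrite y0; apply: X0.
have [G' [G'' [pair [G''y nG'y]]]] := hgl.2.2.2 y yn.
case: (compX pair) => [XG'|G''X]; last by case: nXy; apply: G''X.
by case: nG'y; apply: all_y; split => //; case: pair.
Qed.

End CompatibleSubspaces.

Definition rank_one_stable (K : fieldType) (A B : lmodType K) (q : A -> B -> K)
    (gl : (B -> Prop) -> Prop) (X : B -> Prop) : Prop :=
  forall v z, (forall G, gl G -> forall y, G y -> G (q v y *: z)) ->
  forall y, X y -> X (q v y *: z).

Section RankOneStable.
Variables (K : fieldType) (A B : lmodType K) (q : A -> B -> K).
Hypothesis q_linear : forall a c x y, q a (c *: x + y) = c * q a x + q a y.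
Variable gl : (B -> Prop) -> Prop.
Hypotheses (hgl : gen_flag gl) (hgls : semiclosed (flip_pairing q) gl).
Variable F : A -> Prop.
Let X := perp q F.
Hypothesis stX : rank_one_stable q gl X.

(* For an immediate pair (H', H''), v in H'^perp and z in H'', the operator
   y |-> q v y *: z kills everything below H'' and maps into H''. *)
Lemma rank_one_stabilizes_flag H' H'' v z :
  imm_pair gl H' H'' -> perp (flip_pairing q) H' v -> H'' z ->
  forall G, gl G -> forall y, G y -> G (q v y *: z).
Proof.
move=> pair vH' H''z G glG y Gy; have sG := hgl.1 G glG.
case: (imm_pair_split hgl pair glG) => [H''G | GH'].
  by apply: subspace_scale => //; apply: H''G.
have qvy : q v y = 0 := vH' y (GH' y Gy).
by rewrite qvy scale0r; apply: subspace0.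
Qed.

Lemma perp_in_closure H' H'' z :
  imm_pair gl H' H'' -> H'' z -> ~ X z ->
  subset_of X (pclosure (flip_pairing q) H').
Proof.
move=> pair H''z nXz x Xx v vH'; case: (eqVneq (q v x) 0) => // qvx.
case: nXz; apply: subspace_unscale qvx _; first exact: perp_subspace.
exact: stX (rank_one_stabilizes_flag pair vH' H''z) x Xx.
Qed.

Lemma member_escaping_contains G z : gl G -> G z -> ~ X z -> subset_of X G.
Proof.
move=> glG Gz nXz.
have zn : z <> 0.
  by move=> z0; apply: nXz; rewrite z0; apply: subspace0; apply: perp_subspace.
have [H' [H'' [pair [H''z nH'z]]]] := hgl.2.2.2 z zn.
have H''G : subset_of H'' G.
  by case: (imm_pair_split hgl pair glG) => // GH'; case: nH'z; apply: GH'.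
move=> x /(perp_in_closure pair H''z nXz) clx; apply: H''G.
by case: (hgls pair) => -[clH' _]; [apply: pair.2.2.1 | ]; apply: clH'.
Qed.

Lemma rank_one_stable_compatible : flag_compatible gl X.
Proof.
move=> G' G'' pair.
have [G'X | nG'X] := classic (subset_of G' X); last first.
  have [z [G'z nXz]] := not_subset_witness nG'X.
  by left; apply: member_escaping_contains G'z nXz; case: pair.
have clX := closure_sub_perp G'X.
case: (hgls pair) => -[clG' G'cl]; last by right => z /G'cl; apply: clX.
have [G''X | nG''X] := classic (subset_of G'' X); first by right.
have [z [G''z nXz]] := not_subset_witness nG''X.
by left => x /(perp_in_closure pair G''z nXz); apply: clG'.
Qed.

Lemma rank_one_stable_union_inter :
  nonzero_proper X -> union_of_members gl X /\ inter_of_members gl X.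
Proof.
move=> [nz _]; have compX := rank_one_stable_compatible.
have X0 : X 0 by apply: subspace0; apply: perp_subspace.
split; [exact: (compatible_union hgl compX nz) | exact: (compatible_inter hgl X0 compX)].
Qed.

End RankOneStable.

Lemma union_members_stable (K : fieldType) (C : lmodType K)
    (gl : (C -> Prop) -> Prop) (X : C -> Prop) (f : C -> C) :
  X 0 -> f 0 = 0 -> (forall G, gl G -> forall y, G y -> G (f y)) ->
  (nonzero_proper X -> union_of_members gl X) -> forall y, X y -> X (f y).
Proof.
move=> X0 f0 stG union y Xy.
have [ndX | nndX] := classic (nonzero_proper X).
  have [S [Sgl [XS SX]]] := union ndX.
  have [G [SG Gy]] := XS y Xy.
  by apply: SX; exists G; split => //; apply: stG (Sgl G SG) _ Gy.
have [[x [Xx xn]] | only0] := classic (exists x, X x /\ x <> 0).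
  by apply: NNPP => nXfy; apply: nndX; split; [exists x | exists (f y)].
have -> : y = 0 by apply: NNPP => yn; apply: only0; exists y.
by rewrite f0.
Qed.

Lemma actW_pure (K : fieldType) (V W : lmodType K) (p : V -> W -> K) v z y :
  actW p [:: (v, z)] y = - (p v y *: z).
Proof. by rewrite /actW big_seq1 scaleNr. Qed.

Lemma actV_pure (K : fieldType) (V W : lmodType K) (p : V -> W -> K) z v x :
  actV p [:: (z, v)] x = flip_pairing p v x *: z.
Proof. by rewrite /actV big_seq1. Qed.

Theorem proposition3p3 (K : fieldType) (V W : lmodType K) (p : V -> W -> K)
  (hV : countable_dim V) (hW : countable_dim W) (hp : nondeg_pairing p)
  (fl : (V -> Prop) -> Prop) (gl : (W -> Prop) -> Prop)
  (hfl : gen_flag fl) (hfls : semiclosed p fl)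
  (hgl : gen_flag gl) (hgls : semiclosed (flip_pairing p) gl) :
  taut_couple p fl gl <->
  ((forall F, fl F -> nonzero_proper (perp p F) ->
       union_of_members gl (perp p F) /\ inter_of_members gl (perp p F)) /\
   (forall G, gl G -> nonzero_proper (perp (flip_pairing p) G) ->
       union_of_members fl (perp (flip_pairing p) G) /\
       inter_of_members fl (perp (flip_pairing p) G))).
Proof.
have [p_linl [p_linr _]] := hp.
have q_linr : forall v c (x y : W), p v (c *: x + y) = c * p v x + p v y.
  by move=> *; apply: p_linr.
have q_linl : forall w c (x y : V),
    flip_pairing p w (c *: x + y) = c * flip_pairing p w x + flip_pairing p w y.
  by move=> *; apply: p_linl.
split=> [[_ [_ [_ [_ [stW stV]]]]] | [unionF unionG]].
  split=> [F flF | G glG]; apply: rank_one_stable_union_inter => //.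
    move=> v z stgl y Xy; have sX := perp_subspace q_linr F.
    apply: (subspace_unscale sX (c := -1)); first by rewrite oppr_eq0 oner_eq0.
    rewrite scaleN1r -actW_pure; apply: stW flF y Xy => G' glG' w G'w.
    rewrite actW_pure -scaleN1r; apply: (subspace_scale (hgl.1 G' glG')).
    exact: stgl.
  move=> v z stfl y Xy; rewrite -actV_pure; apply: stV glG y Xy => F flF x Fx.
  by rewrite actV_pure; apply: stfl.
do 4 split=> //; split=> s stS.
  move=> F flF; apply: union_members_stable stS _.
  - exact: subspace0 (perp_subspace q_linr F).
  - by rewrite /actW big1 // => t _; rewrite pairing0r // oppr0 scale0r.
  - by move=> ndX; case: (unionF F flF ndX).
move=> G glG; apply: union_members_stable stS _.
- exact: subspace0 (perp_subspace q_linl G).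
- rewrite /actV big1 // => t _.
  by have p0 : p 0 t.2 = 0 := pairing0r q_linl t.2; rewrite p0 scale0r.
- by move=> ndX; case: (unionG G glG ndX).
Qed.
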